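(* In the single-node deterministic selection process described in the context, for every $\tau\ge1$, $$\big|V^*(i)-\mathbb{E}[V_\tau(i)]\big|\le\frac{c_4}{\tau^{c_5}},\qquad c_4=(b-1)\Big(\Big(\frac{c_1}{\Delta_{\min}(i)}\Big)^{1/c_2}+1\Big),\quad c_5=1-\frac{c_3}{c_2}.$$
   Context: Fix constants $c_1>0$ and $0<c_3<c_2$. A node $i$ has a finite set $C(i)$ of $b\ge2$ children; each child $j$ has a deterministic value $Q^*(j)\in[0,1]$, and there is a unique maximizer $j^*=\arg\max_{j\in C(i)}Q^*(j)$. Set $V^*(i)=Q^*(j^* )$, $\Delta(j)=Q^*(j^* )-Q^*(j)$ and $\Delta_{\min}(i)=\min_{j\neq j^*}\Delta(j)>0$. The node is visited at times $s=1,2,\dots$; at visit $s$ one child $\mu(s)$ is selected and yields value $Q^*(\mu(s))$. Let $T(i,s)=s-1$ be the number of previous visits to $i$ and $T(j,s)$ the number of previous selections of $j$ (before visit $s$). Selection rule: if some child has $T(j,s)=0$, select one such child (chosen at random); otherwise select a maximizer of $Q^*(j)+c_1\,T(i,s)^{c_3}/T(j,s)^{c_2}$, ties broken at random. After $\tau$ visits, $T_\tau(j)$ denotes the number of selections of $j$ among visits $1,\dots,\tau$, and $V_\tau(i)=\frac1\tau\sum_{s=1}^{\tau}Q^*(\mu(s))$ is the average value of node $i$. *)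

From HB Require Import structures.
From mathcomp Require Import all_boot all_order all_algebra.
From mathcomp Require Import all_classical all_reals all_analysis.
Set Implicit Arguments. Unset Strict Implicit. Unset Printing Implicit Defensive.
Import Order.TTheory GRing.Theory Num.Theory.
Local Open Scope ring_scope.

Section Selection.
Variables (R : realType) (C : finType) (Q : C -> R) (c1 c2 c3 : R).

(* A history h : seq C lists the children selected at previous visits
   (in order); at visit s, size h = s - 1 = T(i,s). *)

Definition Tcount (h : seq C) (j : C) : nat := count (pred1 j) h.

Definition score (h : seq C) (j : C) : R :=
  Q j + c1 * (powR (size h)%:R c3) / powR (Tcount h j)%:R c2.

Definition candidates (h : seq C) : seq C :=
  let unvisited := [seq j <- enum C | Tcount h j == 0%N] in
  if unvisited != [::] then unvisited
  else [seq j <- enum C | all (fun k => score h k <= score h j) (enum C)].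

(* Expectation of f over the random continuation of history h for n more
   visits, each choice uniform among the candidates. *)
Fixpoint exp_run (n : nat) (h : seq C) (f : seq C -> R) : R :=
  match n with
  | 0%N => f h
  | n'.+1 => (\sum_(c <- candidates h) exp_run n' (rcons h c) f)
               / (size (candidates h))%:R
  end.

Definition avg_value (tau : nat) (h : seq C) : R :=
  (\sum_(j <- h) Q j) / tau%:R.

Definition expected_value (tau : nat) : R :=
  exp_run tau [::] (avg_value tau).

End Selection.

(* After s visits, every suboptimal child j has T(j) <= 1 or
   Delta_min (T(j) - 1)^c2 <= c1 s^c3: the last time j was selected it
   maximized the score, and comparing its score with that of j* gives exactly
   this inequality (and it persists, since s only grows).
   Hence T(j) <= (c1/Delta_min)^(1/c2) tau^(c3/c2) + 1, and the regret
   V*(i) - V_tau(i) = (1/tau) sum_j T(j) Delta(j) <= (b - 1) max_j T(j) / tau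
   holds pathwise, so it also holds for the expectation. *)
From HB Require Import structures.
From mathcomp Require Import all_boot all_order all_algebra.
From mathcomp Require Import all_classical all_reals all_analysis.
From mathcomp Require Import lra.
Set Implicit Arguments. Unset Strict Implicit. Unset Printing Implicit Defensive.
Import Order.TTheory GRing.Theory Num.Theory.
Local Open Scope ring_scope.

Section SumsOverSeq.
Variables (R : realFieldType) (T : eqType).

Lemma sum_seq_between (s : seq T) (F : T -> R) (lo hi : R) :
  (forall x, x \in s -> lo <= F x <= hi) ->
  lo * (size s)%:R <= \sum_(x <- s) F x <= hi * (size s)%:R.
Proof.
elim: s => [|a s IHs] Fs; first by rewrite big_nil !mulr0 lexx.
rewrite big_cons /= -addn1 natrD !mulrDr !mulr1.
have /andP[lo_a a_hi] := Fs a (mem_head _ _).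
have /andP[lo_s s_hi] : lo * (size s)%:R <= \sum_(x <- s) F x <= hi * (size s)%:R.
  by apply: IHs => x xs; apply: Fs; rewrite in_cons xs orbT.
by apply/andP; split; rewrite addrC lerD.
Qed.

Lemma mean_seq_between (s : seq T) (F : T -> R) (lo hi : R) : s != [::] ->
  (forall x, x \in s -> lo <= F x <= hi) ->
  lo <= (\sum_(x <- s) F x) / (size s)%:R <= hi.
Proof.
move=> s_neq0 /sum_seq_between/andP[lo_sum sum_hi].
have size_gt0 : 0 < (size s)%:R :> R by rewrite ltr0n lt0n size_eq0.
by rewrite ler_pdivlMr // ler_pdivrMr // lo_sum sum_hi.
Qed.

End SumsOverSeq.

Lemma affine_powR_div_le (R : realType) (K a t : R) : 0 <= K -> 0 <= a -> 1 <= t ->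
  (K * powR t a + 1) / t <= (K + 1) / powR t (1 - a).
Proof.
move=> K_ge0 a_ge0 t_ge1; have t_gt0 : 0 < t by apply: lt_le_trans t_ge1.
have pow_ge1 : 1 <= powR t a by rewrite -(powRr0 t) ler_powR.
rewrite powRB ?(lt0r_neq0 t_gt0) ?implybT // (powRr1 (ltW t_gt0)) invf_div mulrA.
by rewrite ler_pM2r ?invr_gt0 // mulrDl mul1r lerD2l.
Qed.

Section Selection.
Variables (R : realType) (C : finType) (Q : C -> R) (c1 c2 c3 : R).

Local Notation score := (score Q c1 c2 c3).
Local Notation candidates := (candidates Q c1 c2 c3).
Local Notation exp_run := (exp_run Q c1 c2 c3).

Lemma candidates_neq0 (j0 : C) (h : seq C) : candidates h != [::].
Proof.
rewrite /candidates /=; case: ifP => // _.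
have [j _ j_max] := @arg_maxP _ _ C j0 xpredT (score h) isT.
apply/eqP => no_max.
have : j \in [seq k <- enum C | all (fun k' => score h k' <= score h k) (enum C)].
  by rewrite mem_filter mem_enum andbT; apply/allP => k _; exact: j_max.
by rewrite no_max.
Qed.

Lemma exp_run_between (P : seq C -> Prop) (f : seq C -> R) (lo hi : R)
    (j0 : C) (n : nat) (h : seq C) :
  (forall h' c, P h' -> c \in candidates h' -> P (rcons h' c)) ->
  (forall h', P h' -> size h' = (size h + n)%N -> lo <= f h' <= hi) ->
  P h -> lo <= exp_run n h f <= hi.
Proof.
move=> P_rcons f_between; elim: n h f_between => [|n IHn] h f_between Ph /=.
  by apply: f_between; rewrite ?addn0.
apply: mean_seq_between; first exact: candidates_neq0 j0 h.
move=> c c_cand; apply: IHn; last exact: P_rcons.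
by move=> h' Ph' size_h'; apply: f_between; rewrite // size_h' size_rcons addSnnS.
Qed.

Lemma Tcount_rcons (h : seq C) (c j : C) :
  Tcount (rcons h c) j = (Tcount h j + (c == j))%N.
Proof. by rewrite /Tcount -cats1 count_cat /= addn0. Qed.

Lemma sum_gap_Tcount (h : seq C) (a : R) :
  a * (size h)%:R - \sum_(x <- h) Q x = \sum_j (Tcount h j)%:R * (a - Q j).
Proof.
elim: h => [|x h IHh]; first by rewrite big_nil mulr0 subr0 big1 // => j; rewrite mul0r.
have -> : \sum_j (Tcount (x :: h) j)%:R * (a - Q j)
    = \sum_j ((x == j)%:R * (a - Q j) + (Tcount h j)%:R * (a - Q j)).
  by apply: eq_bigr => j _; rewrite /Tcount /= natrD mulrDl eq_sym.
rewrite big_split /= -IHh big_cons /= -addn1 natrD mulrDr mulr1.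
rewrite (bigD1 x) //= eqxx mul1r [\sum_(i | i != x) _]big1 ?addr0; first lra.
by move=> j; rewrite eq_sym => /negbTE ->; rewrite mul0r.
Qed.

Variables (jstar : C) (Dmin : R).

(* [(Tcount h j).-1] is the number of selections of [j] before its last one. *)
Definition controlled (h : seq C) : Prop := forall j, j != jstar ->
  (Tcount h j <= 1)%N \/ Dmin * powR (Tcount h j).-1%:R c2 <= c1 * powR (size h)%:R c3.

Hypotheses (c1_gt0 : 0 < c1) (c3_gt0 : 0 < c3) (c3_lt_c2 : c3 < c2).
Hypothesis Dmin_gt0 : 0 < Dmin.
Hypothesis Dmin_le_gap : forall j, j != jstar -> Dmin <= Q jstar - Q j.

Let c2_gt0 : 0 < c2. Proof. exact: lt_trans c3_lt_c2. Qed.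

Lemma controlled_nil : controlled [::].
Proof. by move=> j _; left. Qed.

Lemma selected_score_bound (h : seq C) (j : C) :
  j != jstar -> [seq k <- enum C | Tcount h k == 0%N] = [::] ->
  j \in candidates h -> Dmin * powR (Tcount h j)%:R c2 <= c1 * powR (size h)%:R c3.
Proof.
move=> j_neq all_visited; rewrite /candidates all_visited /= mem_filter.
case/andP=> /allP/(_ jstar (mem_enum _ _)) j_max _.
have Tj_gt0 : (0 < Tcount h j)%N.
  rewrite lt0n; apply/negP => /eqP Tj0.
  have : j \in [seq k <- enum C | Tcount h k == 0%N] by rewrite mem_filter Tj0 mem_enum.
  by rewrite all_visited.
rewrite -ler_pdivlMr; last by rewrite powR_gt0 // ltr0n.
apply: le_trans (Dmin_le_gap j_neq) _.
rewrite lerBlDl; apply: le_trans j_max; rewrite /score lerDl.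
by rewrite divr_ge0 ?mulr_ge0 ?powR_ge0 // ltW.
Qed.

Lemma controlled_rcons (h : seq C) (c : C) :
  controlled h -> c \in candidates h -> controlled (rcons h c).
Proof.
move=> ctrl_h c_cand j j_neq; rewrite Tcount_rcons size_rcons.
have grow : c1 * powR (size h)%:R c3 <= c1 * powR (size h).+1%:R c3.
  by rewrite ler_pM2l // ge0_ler_powR ?nnegrE ?ler0n ?ler_nat // ltW.
have [c_eq|c_neq] := eqVneq c j; last first.
  rewrite addn0; case: (ctrl_h j j_neq) => [|bound]; [by left | right].
  exact: le_trans bound grow.
subst c; rewrite addn1 /=.
have [all_visited|unvisited] := eqVneq [seq k <- enum C | Tcount h k == 0%N] [::].
  by right; apply: le_trans grow; exact: selected_score_bound.
left; move: c_cand; rewrite /candidates /= unvisited mem_filter.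
by case/andP=> /eqP ->.
Qed.

Let K := powR (c1 / Dmin) c2^-1.

Lemma Tcount_le (h : seq C) (j : C) : controlled h -> j != jstar ->
  (Tcount h j)%:R <= K * powR (size h)%:R (c3 / c2) + 1.
Proof.
move=> ctrl_h j_neq; have K_ge0 : 0 <= K by exact: powR_ge0.
have [Tj_le1|Tj_gt1] := leqP (Tcount h j) 1.
  by apply: le_trans (_ : 1 <= _); rewrite ?lern1 // lerDr mulr_ge0 ?powR_ge0.
case: (ctrl_h j j_neq) => [|bound]; first by rewrite leqNgt Tj_gt1.
rewrite -(prednK (ltnW Tj_gt1)) -addn1 natrD lerD2r.
have c1D_ge0 : 0 <= c1 / Dmin by rewrite divr_ge0 // ltW.
have -> : (Tcount h j).-1%:R = powR (powR (Tcount h j).-1%:R c2) c2^-1 :> R.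
  by rewrite -powRrM mulfV ?lt0r_neq0 // powRr1.
rewrite /K powRrM -powRM ?powR_ge0 //.
apply: ge0_ler_powR;
  rewrite ?nnegrE ?invr_ge0 ?(ltW c2_gt0) ?powR_ge0 ?(mulr_ge0 c1D_ge0) ?powR_ge0 //.
by rewrite mulrAC ler_pdivlMr // mulrC.
Qed.

Hypothesis Q_01 : forall j, 0 <= Q j <= 1.

Lemma gap_between (j : C) : 0 <= Q jstar - Q j <= 1.
Proof.
have [->|j_neq] := eqVneq j jstar; first by rewrite subrr lexx ler01.
have gap_ge := Dmin_le_gap j_neq.
have /andP[Qj_ge0 _] := Q_01 j; have /andP[_ Qstar_le1] := Q_01 jstar.
by apply/andP; split; [exact: le_trans (ltW Dmin_gt0) gap_ge | lra].
Qed.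

Lemma weighted_gaps_le (h : seq C) : controlled h ->
  \sum_j (Tcount h j)%:R * (Q jstar - Q j)
    <= (#|C|%:R - 1) * (K * powR (size h)%:R (c3 / c2) + 1).
Proof.
move=> ctrl_h; rewrite (bigD1 jstar) //= subrr mulr0 add0r.
apply: le_trans (_ : \sum_(j | j != jstar) (K * powR (size h)%:R (c3 / c2) + 1) <= _).
  apply: ler_sum => j j_neq; apply: le_trans (Tcount_le ctrl_h j_neq).
  by rewrite ler_piMr ?ler0n //; case/andP: (gap_between j).
have card_gt0 : (0 < #|C|)%N by apply/card_gt0P; exists jstar.
have -> : #|C|%:R - 1 = #|C|.-1%:R :> R by rewrite -subn1 natrB.
by rewrite sumr_const cardC1 mulr_natl.
Qed.

Lemma regret_between (tau : nat) (h : seq C) :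
  (0 < tau)%N -> controlled h -> size h = tau ->
  0 <= Q jstar - avg_value Q tau h
    <= (#|C|%:R - 1) * (K + 1) / powR tau%:R (1 - c3 / c2).
Proof.
move=> tau_gt0 ctrl_h size_h; have tauR_gt0 : 0 < tau%:R :> R by rewrite ltr0n.
have -> : Q jstar - avg_value Q tau h
    = (\sum_j (Tcount h j)%:R * (Q jstar - Q j)) / tau%:R.
  by rewrite -sum_gap_Tcount size_h mulrBl mulfK ?lt0r_neq0.
apply/andP; split.
  rewrite divr_ge0 ?ler0n // sumr_ge0 // => j _.
  by rewrite mulr_ge0 ?ler0n //; case/andP: (gap_between j).
apply: le_trans (_ : (#|C|%:R - 1) * (K * powR tau%:R (c3 / c2) + 1) / tau%:R <= _).
  by rewrite ler_pM2r ?invr_gt0 // -size_h weighted_gaps_le.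
have card_ge1 : (1 <= #|C|)%N by apply/card_gt0P; exists jstar.
rewrite -!mulrA ler_wpM2l ?subr_ge0 ?ler1n // affine_powR_div_le ?powR_ge0 ?ler1n //.
by rewrite divr_ge0 // ltW.
Qed.

End Selection.

Theorem lemma7 (R : realType) (C : finType) (Q : C -> R) (c1 c2 c3 : R)
  (jstar : C) (Dmin : R) (tau : nat) :
  0 < c1 -> 0 < c3 -> c3 < c2 ->
  (2 <= #|C|)%N ->
  (forall j, 0 <= Q j <= 1) ->
  (forall j, j != jstar -> Q j < Q jstar) ->
  (exists2 j : C, j != jstar & Dmin = Q jstar - Q j) ->
  (forall j, j != jstar -> Dmin <= Q jstar - Q j) ->
  (1 <= tau)%N ->
  `| Q jstar - expected_value Q c1 c2 c3 tau |
    <= ((#|C|)%:R - 1) * (powR (c1 / Dmin) (c2^-1) + 1)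
       / powR tau%:R (1 - c3 / c2).
Proof.
move=> c1_gt0 c3_gt0 c3_lt_c2 _ Q_01 Q_lt [j1 j1_neq Dmin_eq] Dmin_le_gap tau_gt0.
have Dmin_gt0 : 0 < Dmin by rewrite Dmin_eq subr_gt0 Q_lt.
set B := _ / _.
have /andP[lo_E E_hi] : Q jstar - B <= expected_value Q c1 c2 c3 tau <= Q jstar.
  apply: (exp_run_between (P := controlled c1 c2 c3 jstar Dmin) jstar).
  - exact: controlled_rcons c1_gt0 c3_gt0 Dmin_le_gap.
  - move=> h ctrl_h size_h.
    have /andP[] := regret_between c1_gt0 c3_gt0 c3_lt_c2 Dmin_gt0 Dmin_le_gap Q_01
      tau_gt0 ctrl_h size_h.
    rewrite -/B => regret_ge0 regret_le.
    by apply/andP; split; lra.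
  - exact: controlled_nil.
by rewrite ger0_norm ?subr_ge0 //; lra.
Qed.
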